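(* Let $r$ be a parameter (an integer or an indeterminate), and let $F_r=(f_{n,k})_{n,k\ge 0}$ be the $f$-matrix of the ordinary Riordan array $H_r=\left(\frac{1}{1-x},\frac{x(1+rx)}{1-x}\right)$, i.e. $F_r=H_r\cdot \mathbf{B}$, where $\mathbf{B}=\left(\binom{n}{k}\right)_{n,k\ge0}$. Then the bivariate generating function of $F_r$ is $$\sum_{n,k\ge 0} f_{n,k}x^ny^k=\frac{1}{1-(y+2)x-r(y+1)x^2},$$ and the bivariate generating function of the reversal $\left(f_{n,n-k}\right)_{0\le k\le n}$ of $F_r$ is $$\sum_{n\ge 0}\sum_{k=0}^n f_{n,n-k}x^ny^k=\frac{1}{1-(2y+1)x-ry(y+1)x^2}.$$
   Context: An ordinary Riordan array $(g(x),f(x))$, where $g(x)=1+g_1x+g_2x^2+\cdots$ and $f(x)=x+f_2x^2+\cdots$ are formal power series, is the lower-triangular matrix $(a_{n,k})_{n,k\ge0}$ with $a_{n,k}=[x^n]g(x)f(x)^k$. The binomial matrix $\mathbf{B}=\left(\binom{n}{k}\right)_{n,k\ge0}$ equals the Riordan array $\left(\frac{1}{1-x},\frac{x}{1-x}\right)$. For a lower-triangular matrix $M$ (here a Pascal-like matrix, i.e. $a_{n,0}=a_{n,n}=1$ and $a_{n,n-k}=a_{n,k}$), its $f$-matrix is the matrix product $M\cdot\mathbf{B}$. The reversal of a lower-triangular matrix $(a_{n,k})$ is the matrix whose $(n,k)$ entry is $a_{n,n-k}$ for $0\le k\le n$ (and $0$ for $k>n$). The bivariate generating function of $(a_{n,k})$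 is $\sum_{n,k}a_{n,k}x^ny^k$. *)

From HB Require Import structures.
From mathcomp Require Import all_boot all_order all_algebra.
Set Implicit Arguments. Unset Strict Implicit. Unset Printing Implicit Defensive.
Import GRing.Theory.
Local Open Scope ring_scope.

(* A formal power series is its coefficient sequence: a n = [x^n] a. *)
Definition fps (R : comNzRingType) := nat -> R.

Section FPS.
Variable R : comNzRingType.

Definition fps_one : fps R := fun n => (n == 0%N)%:R.
Definition fps_x : fps R := fun n => (n == 1%N)%:R.
Definition fps_add (a b : fps R) : fps R := fun n => a n + b n.
Definition fps_scale (c : R) (a : fps R) : fps R := fun n => c * a n.
Definition fps_mul (a b : fps R) : fps R :=
  fun n => \sum_(i < n.+1) a i * b (n - i)%N.
Definition fps_pow (a : fps R) (k : nat) : fps R := iter k (fps_mul a) fps_one.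
Definition fps_inv_1_sub_x : fps R := fun _ => 1.

Definition riordan (g f : fps R) (n k : nat) : R := fps_mul g (fps_pow f k) n.

Definition H_f (r : R) : fps R :=
  fps_mul (fps_mul fps_x (fps_add fps_one (fps_scale r fps_x))) fps_inv_1_sub_x.
Definition H (r : R) (n k : nat) : R := riordan fps_inv_1_sub_x (H_f r) n k.

Definition binom_mx (n k : nat) : R := 'C(n, k)%:R.

(* product M * B of lower-triangular matrices: (M B)_{n,k} = sum_{j<=n} M_{n,j} B_{j,k}
   (terms with j > n vanish since M is lower triangular) *)
Definition ltmx_mul (M N : nat -> nat -> R) (n k : nat) : R :=
  \sum_(j < n.+1) M n j * N j k.

Definition fmatrix (M : nat -> nat -> R) : nat -> nat -> R := ltmx_mul M binom_mx.

Definition reversal (M : nat -> nat -> R) (n k : nat) : R :=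
  if (k <= n)%N then M n (n - k)%N else 0.

Definition bfps := nat -> nat -> R.

Definition bfps_one : bfps := fun n k => ((n == 0%N) && (k == 0%N))%:R.
Definition bfps_x : bfps := fun n k => ((n == 1%N) && (k == 0%N))%:R.
Definition bfps_y : bfps := fun n k => ((n == 0%N) && (k == 1%N))%:R.
Definition bfps_const (c : R) : bfps := fun n k => c * bfps_one n k.
Definition bfps_add (a b : bfps) : bfps := fun n k => a n k + b n k.
Definition bfps_sub (a b : bfps) : bfps := fun n k => a n k - b n k.
Definition bfps_mul (a b : bfps) : bfps :=
  fun n k => \sum_(i < n.+1) \sum_(j < k.+1) a i j * b (n - i)%N (k - j)%N.

(* "F is the bivariate generating function 1/D", i.e. D * F = 1 in R[[x,y]] *)
Definition is_inverse_of (D F : bfps) : Prop :=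
  forall n k, bfps_mul D F n k = bfps_one n k.

End FPS.

(* Column k of H = (1/(1-x), f) with f = x(1+rx)/(1-x) is f^k/(1-x), so the rows of H
   have first differences f^(k+1) = f * f^k; since (1-x) f = x + r x^2 this gives
   h(n,k) = [n=k=0] + h(n-1,k) + h(n-1,k-1) + r h(n-2,k-1), i.e. the generating function
   1/(1 - x - xy - r x^2 y).  Right multiplication by the binomial matrix substitutes
   y := 1 + y in every row, which yields the recurrence of F with denominator
   1 - (y+2)x - r(y+1)x^2.  On lower-triangular arrays the reversal is the substitution
   (x, y) := (xy, 1/y), which sends x^i y^j to x^i y^(i-j); applied to the recurrence of F
   it gives the one with denominator 1 - (2y+1)x - r y(y+1)x^2.  Finally a series d with
   d = 1 + a d + b d is inverse to 1 - a - b. *)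

From HB Require Import structures.
From mathcomp Require Import all_boot all_order all_algebra.
From mathcomp Require Import ring zify.
From Stdlib Require Import FunctionalExtensionality.
Import GRing.Theory.
Set Implicit Arguments.
Unset Strict Implicit.
Unset Printing Implicit Defensive.
Local Open Scope ring_scope.

Section IndicatorSums.
Variable R : comNzRingType.
Implicit Types (F : nat -> R) (i p N : nat).

Lemma sum_indicator_eq F i N :
  \sum_(j < N) (j == i :> nat)%:R * F j = if (i < N)%N then F i else 0.
Proof.
rewrite -(@big_ord1_eq R 0 +%R) [RHS]big_mkcond; apply: eq_bigr => j _.
by rewrite mulr_natl mulrb.
Qed.

Lemma sum_indicator_lt F p N : (p <= N)%N ->
  \sum_(j < N) (j < p)%:R * F j = \sum_(j < p) F j.
Proof.
move=> le_pN; rewrite (big_ord_widen N F le_pN) [RHS]big_mkcond.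
by apply: eq_bigr => j _; rewrite mulr_natl mulrb.
Qed.

End IndicatorSums.

Section BivariateSeries.
Variable R : comNzRingType.
Implicit Types (a b d : bfps R) (c : R) (i j p q : nat).

Definition bfps_mono i j : bfps R := fun n k => ((n == i) && (k == j))%:R.
Definition bfps_scale c a : bfps R := fun n k => c * a n k.
Definition bfps_shift i j a : bfps R :=
  fun n k => if (i <= n)%N && (j <= k)%N then a (n - i)%N (k - j)%N else 0.
Definition lower_triangular a := forall n k, (n < k)%N -> a n k = 0.

Lemma bfps_ext a b : (forall n k, a n k = b n k) -> a = b.
Proof.
move=> eq_ab; apply: functional_extensionality => n.
exact: functional_extensionality (eq_ab n).
Qed.

Lemma bfps_oneE : bfps_one R = bfps_mono 0 0. Proof. by []. Qed.
Lemma bfps_xE : bfps_x R = bfps_mono 1 0. Proof. by []. Qed.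
Lemma bfps_yE : bfps_y R = bfps_mono 0 1. Proof. by []. Qed.
Lemma bfps_constE c : bfps_const c = bfps_scale c (bfps_mono 0 0). Proof. by []. Qed.

Lemma bfps_mul_addl a b d :
  bfps_mul (bfps_add a b) d = bfps_add (bfps_mul a d) (bfps_mul b d).
Proof.
apply: bfps_ext => n k.
rewrite /bfps_mul /bfps_add -big_split; apply: eq_bigr => i _.
by rewrite -big_split; apply: eq_bigr => j _; rewrite mulrDl.
Qed.

Lemma bfps_mul_addr a b d :
  bfps_mul a (bfps_add b d) = bfps_add (bfps_mul a b) (bfps_mul a d).
Proof.
apply: bfps_ext => n k.
rewrite /bfps_mul /bfps_add -big_split; apply: eq_bigr => i _.
by rewrite -big_split; apply: eq_bigr => j _; rewrite mulrDr.
Qed.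

Lemma bfps_mul_subl a b d :
  bfps_mul (bfps_sub a b) d = bfps_sub (bfps_mul a d) (bfps_mul b d).
Proof.
apply: bfps_ext => n k.
rewrite /bfps_mul /bfps_sub -sumrB; apply: eq_bigr => i _.
by rewrite -sumrB; apply: eq_bigr => j _; rewrite mulrBl.
Qed.

Lemma bfps_mul_scalel c a b :
  bfps_mul (bfps_scale c a) b = bfps_scale c (bfps_mul a b).
Proof.
apply: bfps_ext => n k.
rewrite /bfps_mul /bfps_scale mulr_sumr; apply: eq_bigr => i _.
by rewrite mulr_sumr; apply: eq_bigr => j _; rewrite mulrA.
Qed.

Lemma bfps_mul_scaler c a b :
  bfps_mul a (bfps_scale c b) = bfps_scale c (bfps_mul a b).
Proof.
apply: bfps_ext => n k.
rewrite /bfps_mul /bfps_scale mulr_sumr; apply: eq_bigr => i _.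
by rewrite mulr_sumr; apply: eq_bigr => j _; rewrite mulrCA.
Qed.

Lemma bfps_mul_monol i j a : bfps_mul (bfps_mono i j) a = bfps_shift i j a.
Proof.
apply: bfps_ext => n k.
rewrite /bfps_mul /bfps_mono /bfps_shift.
under eq_bigr => i' _ do under eq_bigr => j' _ do rewrite -mulnb natrM -mulrA.
under eq_bigr => i' _ do
  rewrite -mulr_sumr (sum_indicator_eq (fun j' => a (n - i')%N (k - j')%N)).
rewrite (sum_indicator_eq (fun i' => if (j < k.+1)%N then a (n - i')%N (k - j)%N else 0)).
by rewrite !ltnS; case: (i <= n)%N; case: (j <= k)%N.
Qed.

Lemma bfps_shift_mono i j p q :
  bfps_shift i j (bfps_mono p q) = bfps_mono (i + p) (j + q).
Proof.
apply: bfps_ext => n k.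
rewrite /bfps_shift /bfps_mono.
case: (leqP i n) => [le_in|lt_ni]; case: (leqP j k) => [le_jk|lt_kj] /=.
- have -> : (n - i == p)%N = (n == i + p)%N by apply/eqP/eqP; lia.
  by have -> : (k - j == q)%N = (k == j + q)%N by apply/eqP/eqP; lia.
- by rewrite (_ : (k == j + q)%N = false) ?andbF //; apply/eqP; lia.
- by rewrite (_ : (n == i + p)%N = false) //; apply/eqP; lia.
- by rewrite (_ : (n == i + p)%N = false) //; apply/eqP; lia.
Qed.

Lemma bfps_shift00 a : bfps_shift 0 0 a = a.
Proof.
apply: bfps_ext => n k.
by rewrite /bfps_shift !subn0.
Qed.

Lemma bfps_shiftSl i j a n k :
  bfps_shift i.+1 j a n.+1 k = bfps_shift i j a n k.
Proof. by rewrite /bfps_shift ltnS subSS. Qed.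

Lemma bfps_shiftSr i j a n k :
  bfps_shift i j.+1 a n k.+1 = bfps_shift i j a n k.
Proof. by rewrite /bfps_shift ltnS subSS. Qed.

Lemma is_inverse_of_one_sub_sub a b d :
  (forall n k, d n k = bfps_one R n k + bfps_mul a d n k + bfps_mul b d n k) ->
  is_inverse_of (bfps_sub (bfps_sub (bfps_one R) a) b) d.
Proof.
move=> d_rec n k.
rewrite !bfps_mul_subl bfps_oneE bfps_mul_monol bfps_shift00 /bfps_sub -bfps_oneE.
by rewrite {1}d_rec; ring.
Qed.

End BivariateSeries.

Section Reversal.
Variable R : comNzRingType.
Implicit Types (a b : bfps R) (c : R) (i j : nat).

Lemma reversal_add a b :
  reversal (bfps_add a b) = bfps_add (reversal a) (reversal b).
Proof.
apply: bfps_ext => n k.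
by rewrite /reversal /bfps_add; case: ifP; rewrite ?addr0.
Qed.

Lemma reversal_scale c a : reversal (bfps_scale c a) = bfps_scale c (reversal a).
Proof.
apply: bfps_ext => n k.
by rewrite /reversal /bfps_scale; case: ifP; rewrite ?mulr0.
Qed.

Lemma reversal_one : reversal (bfps_one R) = bfps_one R.
Proof.
apply: bfps_ext => n k.
rewrite /reversal /bfps_one; case: leqP => [le_kn|lt_nk].
  by case: n le_kn => [|n] //=; rewrite leqn0 => /eqP->.
by rewrite (_ : (k == 0)%N = false) ?andbF //; apply/eqP; lia.
Qed.

Lemma reversal_shift i j a : (j <= i)%N -> lower_triangular a ->
  reversal (bfps_shift i j a) = bfps_shift i (i - j) (reversal a).
Proof.
move=> le_ji a_lt.
apply: bfps_ext => n k.
rewrite /reversal /bfps_shift.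
(* Triangularity of [a] is needed only when k + j < i: the left side is then
   a (n - i) (n - k - j), strictly above the diagonal. *)
repeat case: ifP => /= ?; try done.
all: try (congr a; lia).
all: rewrite a_lt //; lia.
Qed.

End Reversal.

Section FMatrix.
Variable R : comNzRingType.
Implicit Types (M L : bfps R) (c : R).

Lemma fmatrix_add M L : fmatrix (bfps_add M L) = bfps_add (fmatrix M) (fmatrix L).
Proof.
apply: bfps_ext => n k.
by rewrite /fmatrix /ltmx_mul /bfps_add -big_split; apply: eq_bigr => j _; rewrite mulrDl.
Qed.

Lemma fmatrix_scale c M : fmatrix (bfps_scale c M) = bfps_scale c (fmatrix M).
Proof.
apply: bfps_ext => n k.
by rewrite /fmatrix /ltmx_mul /bfps_scale mulr_sumr; apply: eq_bigr => j _; rewrite mulrA.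
Qed.

Lemma fmatrix_one : fmatrix (bfps_one R) = bfps_one R.
Proof.
apply: bfps_ext => n k.
rewrite /fmatrix /ltmx_mul big_ord_recl big1 => [|j _]; last first.
  by rewrite /bfps_one andbF mul0r.
by rewrite addr0 /binom_mx bin0n /bfps_one andbT -natrM mulnb.
Qed.

Lemma lower_triangular_fmatrix M : lower_triangular (fmatrix M).
Proof.
move=> n k lt_nk; rewrite /fmatrix /ltmx_mul big1 // => j _.
by rewrite /binom_mx bin_small ?mulr0 //; have := ltn_ord j; lia.
Qed.

Lemma fmatrix_widen M n k N : lower_triangular M -> (n < N)%N ->
  fmatrix M n k = \sum_(j < N) M n j * 'C(j, k)%:R.
Proof.
move=> M_lt lt_nN; rewrite /fmatrix /ltmx_mul /binom_mx.
rewrite (big_ord_widen N (fun j => M n j * 'C(j, k)%:R) lt_nN) big_mkcond.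
by apply: eq_bigr => j _; case: ltnP => // le_nj; rewrite M_lt ?mul0r.
Qed.

Lemma fmatrix_shift_x i M : lower_triangular M ->
  fmatrix (bfps_shift i 0 M) = bfps_shift i 0 (fmatrix M).
Proof.
move=> M_lt; apply: bfps_ext => n k.
rewrite /bfps_shift [in LHS]/fmatrix /ltmx_mul !subn0.
case: (leqP i n) => [le_in|lt_ni] /=; last by rewrite big1 // => j _; rewrite mul0r.
under eq_bigr => j _ do rewrite subn0.
by rewrite [RHS](fmatrix_widen _ M_lt (_ : (n - i < n.+1)%N)) // ltnS leq_subr.
Qed.

Lemma fmatrix_shift_xy i M : lower_triangular M ->
  fmatrix (bfps_shift i.+1 1 M)
  = bfps_add (bfps_shift i.+1 0 (fmatrix M)) (bfps_shift i.+1 1 (fmatrix M)).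
Proof.
move=> M_lt; apply: bfps_ext => n k.
rewrite /bfps_add /bfps_shift [in LHS]/fmatrix /ltmx_mul.
case: (leqP i.+1 n) => [le_in|lt_ni] /=.
  2: by rewrite big1 ?addr0 // => j _; rewrite mul0r.
rewrite big_ord_recl /= mul0r add0r.
under eq_bigr => j _ do rewrite /bump leq0n add1n subSS subn0.
have lt_n : (n - i.+1 < n)%N by lia.
rewrite subn0 !(fmatrix_widen _ M_lt lt_n) /binom_mx.
case: k => [|k] /=.
  by rewrite addr0; apply: eq_bigr => j _; rewrite !bin0.
rewrite subSS subn0 -big_split; apply: eq_bigr => j _.
by rewrite binS natrD mulrDr.
Qed.
End FMatrix.

Section PowerSeries.
Variable R : comNzRingType.
Implicit Types (a f : fps R).

Lemma fps_mulC a f n : fps_mul a f n = fps_mul f a n.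
Proof.
rewrite /fps_mul (reindex_inj rev_ord_inj); apply: eq_bigr => i _.
by rewrite /= subSS subKn 1?mulrC // -ltnS.
Qed.

Lemma fps_mul_inv_1_sub_x a n :
  fps_mul a (fps_inv_1_sub_x R) n = \sum_(i < n.+1) a i.
Proof. by apply: eq_bigr => i _; rewrite mulr1. Qed.

Lemma fps_powS f k : fps_pow f k.+1 = fps_mul f (fps_pow f k).
Proof. by []. Qed.

Lemma fps_pow_small f k m : f 0%N = 0 -> (m < k)%N -> fps_pow f k m = 0.
Proof.
move=> f0; elim: k m => [//|k IHk] m lt_mk.
rewrite fps_powS /fps_mul big1 // => -[[|i] lt_im _] /=; first by rewrite f0 mul0r.
by rewrite IHk ?mulr0 //; lia.
Qed.

End PowerSeries.

Section RiordanArray.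
Variables (R : comNzRingType) (r : R).

Local Notation f := (H_f r).
Local Notation P k := (fps_pow (H_f r) k).

Lemma H_f_coef n : f n = (0 < n)%:R + r * (1 < n)%:R.
Proof.
have x_1_rx i : fps_mul (fps_x R) (fps_add (fps_one R) (fps_scale r (fps_x R))) i
    = (i == 1)%:R * 1 + (i == 2)%:R * r.
  rewrite /fps_mul /fps_x (sum_indicator_eq (fun l => fps_add _ _ (i - l)%N)).
  by case: i => [|[|[|i]]]; rewrite /fps_add /fps_one /fps_scale /=; ring.
rewrite /H_f fps_mul_inv_1_sub_x; under eq_bigr => i _ do rewrite x_1_rx.
rewrite big_split /=.
rewrite (sum_indicator_eq (fun=> 1)) (sum_indicator_eq (fun=> r)) !ltnS.
by case: n => [|[|n]] /=; ring.
Qed.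

Lemma H_sum n k : H r n k = \sum_(m < n.+1) P k m.
Proof. by rewrite /H /riordan fps_mulC fps_mul_inv_1_sub_x. Qed.

Lemma H_f_pow_small k m : (m < k)%N -> P k m = 0.
Proof. by apply: fps_pow_small; rewrite H_f_coef mulr0 addr0. Qed.

Lemma H_col0 n : H r n 0 = 1.
Proof. by rewrite H_sum big_ord_recl big1 ?addr0. Qed.

Lemma H_lower_triangular : lower_triangular (H r).
Proof.
move=> n k lt_nk; rewrite H_sum big1 // => m _.
by apply: H_f_pow_small; have := ltn_ord m; lia.
Qed.

Lemma H_partial_sum k n : \sum_(m < n) P k m = bfps_shift 1 0 (H r) n k.
Proof.
case: n => [|n]; first by rewrite big_ord0.
by rewrite bfps_shiftSl bfps_shift00 H_sum.
Qed.

Lemma H_f_powS k m :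
  P k.+1 m = bfps_shift 1 0 (H r) m k + r * bfps_shift 2 0 (H r) m k.
Proof.
rewrite fps_powS fps_mulC /fps_mul.
under eq_bigr => j _ do
  rewrite mulrC H_f_coef mulrDl -mulrA subn_gt0 ltn_subRL addn1 -ltn_predRL.
have le_pred_m : (m.-1 <= m.+1)%N by lia.
rewrite big_split /= -mulr_sumr (sum_indicator_lt (P k) (leqnSn m)).
rewrite (sum_indicator_lt (P k) le_pred_m) H_partial_sum {le_pred_m}.
case: m => [|m]; first by rewrite big_ord0.
by rewrite H_partial_sum bfps_shiftSl.
Qed.

Lemma H_rec : H r = bfps_add (bfps_add (bfps_add (bfps_one R)
  (bfps_shift 1 0 (H r))) (bfps_shift 1 1 (H r))) (bfps_scale r (bfps_shift 2 1 (H r))).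
Proof.
apply: bfps_ext => n k.
rewrite /bfps_add /bfps_scale; case: k => [|k].
  case: n => [|n]; rewrite ?bfps_shiftSl /bfps_shift /bfps_one /= ?andbF ?subn0.
    by rewrite H_col0; ring.
  by rewrite !H_col0; ring.
rewrite !bfps_shiftSr H_sum big_ord_recr /= -fps_powS H_partial_sum H_f_powS.
by rewrite /bfps_one andbF add0r addrA.
Qed.

Local Notation F := (fmatrix (H r)).

Lemma fmatrix_H_rec : F = bfps_add (bfps_add (bfps_add (bfps_one R)
    (bfps_shift 1 0 F)) (bfps_add (bfps_shift 1 0 F) (bfps_shift 1 1 F)))
  (bfps_scale r (bfps_add (bfps_shift 2 0 F) (bfps_shift 2 1 F))).
Proof.
have H_lt := H_lower_triangular.
by rewrite {1}H_rec !fmatrix_add fmatrix_scale fmatrix_one (fmatrix_shift_x _ H_lt)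
  !(fmatrix_shift_xy _ H_lt).
Qed.

Local Notation G := (reversal F).

Lemma reversal_fmatrix_H_rec : G = bfps_add (bfps_add (bfps_add (bfps_one R)
    (bfps_shift 1 1 G)) (bfps_add (bfps_shift 1 1 G) (bfps_shift 1 0 G)))
  (bfps_scale r (bfps_add (bfps_shift 2 2 G) (bfps_shift 2 1 G))).
Proof.
have F_lt := lower_triangular_fmatrix (H r).
rewrite {1}fmatrix_H_rec !reversal_add reversal_scale reversal_add reversal_one.
by rewrite !(reversal_shift _ F_lt) // !subn0 subnn subn1.
Qed.

End RiordanArray.

Theorem proposition2 (R : comNzRingType) (r : R) :
  let F := fmatrix (H r) in
  let x := bfps_x R in
  let y := bfps_y R in
  let c := @bfps_const R in
  (* 1/(1 - (y+2)x - r(y+1)x^2) *)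
  is_inverse_of
    (bfps_sub (bfps_sub (bfps_one R) (bfps_mul (bfps_add y (c 2)) x))
       (bfps_mul (c r) (bfps_mul (bfps_add y (c 1)) (bfps_mul x x))))
    F
  /\
  (* 1/(1 - (2y+1)x - r y(y+1)x^2) *)
  is_inverse_of
    (bfps_sub (bfps_sub (bfps_one R) (bfps_mul (bfps_add (bfps_mul (c 2) y) (c 1)) x))
       (bfps_mul (c r) (bfps_mul (bfps_mul y (bfps_add y (c 1))) (bfps_mul x x))))
    (reversal F).
Proof.
cbv zeta; rewrite bfps_xE bfps_yE !bfps_constE.
split; apply: is_inverse_of_one_sub_sub => n k;
  rewrite !(bfps_mul_addl, bfps_mul_addr, bfps_mul_scalel, bfps_mul_scaler,
            bfps_mul_monol, bfps_shift_mono, bfps_shift00) !(add0n, addn0, addn1).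
- by rewrite {1}fmatrix_H_rec /bfps_add /bfps_scale; ring.
- by rewrite {1}reversal_fmatrix_H_rec /bfps_add /bfps_scale; ring.
Qed.
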